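(* Let $A \in \mathbb{R}^{n\times d}$, $b \in \mathbb{R}^n$, and suppose $Ax=b$ admits a solution $x^*$ (not necessarily unique). Let $w$ be a random variable in $\mathbb{R}^n$, $\mathcal{N}(w) = \mathrm{span}\lbrace z \in \mathbb{R}^d : \mathbb{P}[z'A'w = 0]=1\rbrace$, $\mathcal{R}(w) = \mathcal{N}(w)^\perp$, and let $\mathcal{V}(w)$ be the subspace with $\mathcal{V}(w) \perp \mathcal{R}(w)$ and $\mathcal{V}(w) \oplus \mathcal{R}(w) = \mathrm{row}(A)$. Let $w_0,w_1,\ldots$ be random variables in $\mathbb{R}^n$ with $\mathbb{P}[A'w_l \in \mathcal{R}(w)]=1$ for all $l$, let $T = \min\lbrace k\geq 0 : \mathrm{span}\lbrace A'w_0,\ldots,A'w_k\rbrace \supset \mathcal{R}(w)\rbrace$, let $x_0\in\mathbb{R}^d$ be arbitrary, $S_0 = I_d$, and for $l\geq 0$ $$x_{l+1} = \begin{cases} x_l + \dfrac{S_l A' w_l w_l'(b - A x_l)}{w_l' A S_l A' w_l} & S_l A'w_l \neq 0,\\ x_l & \text{otherwise,}\end{cases}\qquad S_{l+1} = \begin{cases} S_l - \dfrac{S_l A' w_l w_l' A S_l}{w_l' A S_l A' w_l} & S_l A' w_l \neq 0,\\ S_l & \text{otherwise.}\end{cases}$$ Then, almost surely on the event $\lbrace T < \infty\rbrace$, $Ax_{T+1} = b$ if and only if $P_{\mathcal{V}(w)} x_0 = P_{\mathcal{V}(w)} x^*$.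
   Context: $P_W$ denotes orthogonal projection onto subspace $W$; $\mathrm{row}(A)$ is the row space of $A$ (a subspace of $\mathbb{R}^d$); $A'$ is the transpose. *)

From HB Require Import structures.
From mathcomp Require Import all_boot all_order all_algebra.
From mathcomp Require Import all_classical all_reals all_analysis.
Set Implicit Arguments. Unset Strict Implicit. Unset Printing Implicit Defensive.
Import Order.TTheory GRing.Theory Num.Theory.
Local Open Scope ring_scope.

(* Vectors of R^d are column vectors 'cV_d; subspaces of R^d are represented
   (as in mxalgebra) by the row space of a matrix whose rows lie in 'rV_d,
   so a column vector y belongs to the subspace U iff (y^T <= U)%MS. *)

Section Defs.
Variables (R : realType) (n d : nat).

Definition rk_step (A : 'M[R]_(n, d)) (b : 'cV[R]_n)
    (xS : 'cV[R]_d * 'M[R]_d) (w : 'cV[R]_n) : 'cV[R]_d * 'M[R]_d :=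
  let x := xS.1 in let S := xS.2 in
  let v := S *m A^T *m w in
  if v == 0 then (x, S) else
  let den := (w^T *m A *m S *m A^T *m w) 0 0 in
  (x + den^-1 *: (v *m w^T *m (b - A *m x)),
   S - den^-1 *: (v *m w^T *m A *m S)).

Fixpoint rk_iter (A : 'M[R]_(n, d)) (b : 'cV[R]_n) (x0 : 'cV[R]_d)
    (ws : nat -> 'cV[R]_n) (l : nat) : 'cV[R]_d * 'M[R]_d :=
  match l with
  | 0 => (x0, 1%:M)
  | l'.+1 => rk_step A b (rk_iter A b x0 ws l') (ws l')
  end.

Definition orthproj (V : 'M[R]_d) (x : 'cV[R]_d) : 'cV[R]_d :=
  let B := row_base V in (B^T *m invmx (B *m B^T) *m B) *m x.

Definition span_upto (A : 'M[R]_(n, d)) (ws : nat -> 'cV[R]_n) (k : nat)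
  : 'M[R]_(k.+1, d) :=
  \matrix_(i < k.+1) (A^T *m ws i)^T.

End Defs.

From HB Require Import structures.
From mathcomp Require Import all_boot all_order all_algebra.
From mathcomp Require Import all_classical all_reals all_analysis.
From mathcomp Require Import measurable_realfun.
Import Order.TTheory GRing.Theory Num.Theory.
Local Open Scope ring_scope.
Local Open Scope classical_set_scope.

Set Implicit Arguments. Unset Strict Implicit. Unset Printing Implicit Defensive.

(* Write D_l for span{A'w_j : j < l}, the row space of [dirs A ws l]. By
   induction, S_l is the orthogonal projector onto the orthogonal complement
   of D_l, x_l - x_0 lies in D_l, and x* - x_l is orthogonal to D_l.
   Almost surely every A'w_l lies in R(w), so D_(T+1) = R(w). Hence
   x_(T+1) - x_0 lies in R(w), which V(w) annihilates, and x* - x_(T+1) is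
   orthogonal to R(w); since row(A) = V(w) + R(w), A x_(T+1) = b holds iff
   x* - x_(T+1), equivalently x* - x_0, is orthogonal to V(w). *)

Section RealMatrix.
Variable R : realFieldType.

Lemma mulmx_trmx_eq0 m n (M : 'M[R]_(m, n)) : (M *m M^T == 0) = (M == 0).
Proof.
apply/eqP/eqP => [MMt0|->]; last by rewrite mul0mx.
apply/matrixP => i j; rewrite mxE.
have /eqP : (M *m M^T) i i = 0 by rewrite MMt0 mxE.
rewrite mxE psumr_eq0 => [/allP/(_ j (mem_index_enum j))|k _].
  by rewrite mxE -expr2 sqrf_eq0 => /eqP.
by rewrite mxE -expr2 sqr_ge0.
Qed.

Lemma trmx_mulmx_eq0 n (u : 'cV[R]_n) : (u^T *m u == 0) = (u == 0).
Proof. by rewrite -[u in _ *m u]trmxK mulmx_trmx_eq0 trmx_eq0. Qed.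

Lemma mulmx_trmx_unitmx m n (B : 'M[R]_(m, n)) : row_free B -> B *m B^T \in unitmx.
Proof.
move=> freeB; rewrite -row_free_unit; apply/inj_row_free => r rBBt0.
apply/eqP; rewrite -(mulmx_free_eq0 _ freeB) -mulmx_trmx_eq0 trmx_mul mulmxA.
by rewrite -(mulmxA r) rBBt0 mul0mx.
Qed.

End RealMatrix.

Lemma submx_mul_eq0 (F : fieldType) m1 m2 n p (M : 'M[F]_(m1, n)) (N : 'M[F]_(m2, n))
    (Y : 'M[F]_(n, p)) :
  (M <= N)%MS -> N *m Y = 0 -> M *m Y = 0.
Proof. by move=> /submxP[D ->] NY0; rewrite -mulmxA NY0 mulmx0. Qed.

Section ProjectorUpdate.
Variables (R : realFieldType) (d : nat).
Implicit Types (S : 'M[R]_d) (u x xstar : 'cV[R]_d).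

Definition qform S u : R := (u^T *m S *m u) 0 0.

Definition proj_update S u : 'M[R]_d :=
  S - (qform S u)^-1 *: (S *m u *m (u^T *m S)).

Definition sol_update xstar S u x : 'cV[R]_d :=
  x + (qform S u)^-1 *: (S *m u *m (u^T *m (xstar - x))).

Variables (S : 'M[R]_d) (u : 'cV[R]_d).
Hypotheses (S_sym : S^T = S) (S_idem : S *m S = S).

Let v := S *m u.
Let c := (qform S u)^-1.

Let tr_v : v^T = u^T *m S.
Proof. by rewrite trmx_mul S_sym. Qed.

Let S_v : S *m v = v.
Proof. by rewrite mulmxA S_idem. Qed.

Let tr_u_v : u^T *m v = (qform S u)%:M.
Proof. by rewrite mulmxA [LHS]mx11_scalar. Qed.

Let tr_v_v : v^T *m v = (qform S u)%:M.
Proof. by rewrite tr_v -mulmxA S_v. Qed.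

(* The form vanishes only if v does, so the updates need no case split. *)
Let scale_v : (c * qform S u) *: v = v.
Proof.
have [q0|qn0] := eqVneq (qform S u) 0; last by rewrite mulVf // scale1r.
have /eqP -> : v == 0 by rewrite -trmx_mulmx_eq0 tr_v_v q0 raddf0.
by rewrite scaler0.
Qed.

Lemma proj_update_sym : (proj_update S u)^T = proj_update S u.
Proof.
by rewrite /proj_update -/v -tr_v linearB linearZ /= trmx_mul trmxK S_sym.
Qed.

Lemma proj_update_idem : proj_update S u *m proj_update S u = proj_update S u.
Proof.
rewrite /proj_update -/v -/c -tr_v; set P := v *m v^T.
have SP : S *m P = P by rewrite mulmxA S_v.
have PS : P *m S = P by rewrite -mulmxA -{1}S_sym -trmx_mul S_v.
have PP : P *m P = qform S u *: P.
  by rewrite mulmxA -[v *m v^T *m v]mulmxA tr_v_v mul_mx_scalar -scalemxAl.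
have cqP : (c * qform S u) *: P = P by rewrite scalemxAl scale_v.
rewrite mulmxBl !mulmxBr S_idem -!scalemxAl -!scalemxAr SP PS PP.
by rewrite [c *: (_ *: P)]scalerA cqP subrr subr0.
Qed.

Lemma proj_update_kills_u : u^T *m proj_update S u = 0.
Proof.
rewrite /proj_update -/v -/c -tr_v mulmxBr -scalemxAr mulmxA tr_u_v.
by rewrite mul_scalar_mx scalerA -tr_v -linearZ /= scale_v subrr.
Qed.

Lemma proj_update_kills p (M : 'M[R]_(p, d)) : M *m S = 0 -> M *m proj_update S u = 0.
Proof.
move=> MS0; rewrite /proj_update mulmxBr MS0 sub0r -scalemxAr !mulmxA.
by rewrite MS0 !mul0mx scaler0 oppr0.
Qed.

Let tr_v_sub : (v^T <= (1%:M - S) + u^T)%MS.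
Proof.
have -> : v^T = u^T - u^T *m (1%:M - S) by rewrite mulmxBr mulmx1 opprB addrC subrK tr_v.
rewrite addmx_sub ?addsmxSr // eqmx_opp.
exact: submx_trans (submxMl _ _) (addsmxSl _ _).
Qed.

Lemma proj_update_compl : (1%:M - proj_update S u <= (1%:M - S) + u^T)%MS.
Proof.
rewrite /proj_update -/v -/c -tr_v opprB addrA addrAC addmx_sub ?addsmxSl //.
by rewrite scalemx_sub // (submx_trans (submxMl _ _) tr_v_sub).
Qed.

Lemma sol_update_drift xstar x :
  ((sol_update xstar S u x - x)^T <= (1%:M - S) + u^T)%MS.
Proof.
rewrite /sol_update addrAC subrr add0r linearZ /= trmx_mul -/v scalemx_sub //.
exact: submx_trans (submxMl _ _) tr_v_sub.
Qed.

Lemma sol_update_solves_u xstar x : (1%:M - S) *m (xstar - x) = 0 ->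
  u^T *m (xstar - sol_update xstar S u x) = 0.
Proof.
move=> /eqP; rewrite mulmxBl mul1mx subr_eq0 => /eqP eS.
rewrite /sol_update -/v -/c opprD addrA mulmxBr -scalemxAr.
rewrite [u^T *m (v *m _)]mulmxA tr_u_v mul_scalar_mx scalerA eS !mulmxA -tr_v.
by rewrite scalemxAl -linearZ /= scale_v subrr.
Qed.

Lemma sol_update_solves p (M : 'M[R]_(p, d)) xstar x :
  M *m S = 0 -> M *m (xstar - x) = 0 -> M *m (xstar - sol_update xstar S u x) = 0.
Proof.
move=> MS0 Me0; rewrite /sol_update opprD addrA mulmxBr Me0 sub0r.
by rewrite -scalemxAr !mulmxA MS0 !mul0mx scaler0 oppr0.
Qed.

End ProjectorUpdate.

Section Iteration.
Variables (R : realType) (n d : nat) (A : 'M[R]_(n, d)) (b : 'cV[R]_n).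
Variables (xstar x0 : 'cV[R]_d) (ws : nat -> 'cV[R]_n).
Hypothesis Axstar : A *m xstar = b.

Definition dirs l : 'M[R]_(l, d) := \matrix_(i < l) (A^T *m ws i)^T.

Lemma dirsS l : (dirs l.+1 == dirs l + (A^T *m ws l)^T)%MS.
Proof.
apply/andP; split.
  apply/row_subP => i; rewrite rowK.
  have [il|li] := ltnP i l.
    have -> : (A^T *m ws i)^T = row (Ordinal il) (dirs l) by rewrite rowK.
    exact: submx_trans (row_sub _ _) (addsmxSl _ _).
  have -> : nat_of_ord i = l by apply/eqP; rewrite eqn_leq li -ltnS ltn_ord.
  exact: addsmxSr.
rewrite addsmx_sub; apply/andP; split.
  apply/row_subP => i; rewrite rowK.
  have -> : (A^T *m ws i)^T = row (widen_ord (leqnSn l) i) (dirs l.+1) by rewrite rowK.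
  exact: row_sub.
have -> : (A^T *m ws l)^T = row ord_max (dirs l.+1) by rewrite rowK.
exact: row_sub.
Qed.

(* In the degenerate branch S A'w = 0 of [rk_step] both updates vanish. *)
Lemma rk_stepE x S w :
  rk_step A b (x, S) w = (sol_update xstar S (A^T *m w) x, proj_update S (A^T *m w)).
Proof.
have trAw : (A^T *m w)^T = w^T *m A by rewrite trmx_mul trmxK.
rewrite /rk_step /sol_update /proj_update /qform trAw -Axstar -mulmxBr /= !mulmxA.
by case: eqP => [->|]; rewrite ?mul0mx ?scaler0 ?addr0 ?subr0.
Qed.

Lemma dirsS_mul_eq0 l p (Y : 'M[R]_(d, p)) :
  (dirs l.+1 *m Y == 0) = (dirs l *m Y == 0) && ((A^T *m ws l)^T *m Y == 0).
Proof. by rewrite -!sub_kermx (eqmxP (dirsS l)) addsmx_sub. Qed.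

Record rk_invariant (l : nat) (xS : 'cV[R]_d * 'M[R]_d) : Prop := RkInvariant {
  rk_sym : xS.2^T = xS.2;
  rk_idem : xS.2 *m xS.2 = xS.2;
  rk_ker : dirs l *m xS.2 = 0;
  rk_consistent : dirs l *m (xstar - xS.1) = 0;
  rk_drift : ((xS.1 - x0)^T <= dirs l)%MS;
  rk_compl : (1%:M - xS.2 <= dirs l)%MS }.

Lemma rk_invariant_step l xS :
  rk_invariant l xS -> rk_invariant l.+1 (rk_step A b xS (ws l)).
Proof.
case: xS => x S [/= Ssym Sidem Sker Scons Sdrift Scompl].
set u := A^T *m ws l.
have dirs_sub : (dirs l <= dirs l.+1)%MS by rewrite (eqmxP (dirsS l)) addsmxSl.
have sub_dirs p (M : 'M[R]_(p, d)) : (M <= (1%:M - S) + u^T)%MS -> (M <= dirs l.+1)%MS.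
  by move/submx_trans; apply; rewrite (eqmxP (dirsS l)) addsmxS.
have Se : (1%:M - S) *m (xstar - x) = 0 by exact: submx_mul_eq0 Scompl Scons.
rewrite rk_stepE; split => /=.
- exact: proj_update_sym.
- exact: proj_update_idem.
- apply/eqP; rewrite dirsS_mul_eq0 -/u.
  by rewrite proj_update_kills // proj_update_kills_u // !eqxx.
- apply/eqP; rewrite dirsS_mul_eq0 -/u.
  by rewrite sol_update_solves // sol_update_solves_u // !eqxx.
- set x' := sol_update _ _ _ x.
  have -> : x' - x0 = (x' - x) + (x - x0) by rewrite addrA subrK.
  rewrite linearD addmx_sub //; first by apply: sub_dirs; apply: sol_update_drift.
  exact: submx_trans Sdrift dirs_sub.
- by apply: sub_dirs; apply: proj_update_compl.
Qed.

Lemma rk_iter_invariant l : rk_invariant l (rk_iter A b x0 ws l).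
Proof.
elim: l => [|l IHl]; last exact: rk_invariant_step.
split => //=; rewrite ?trmx1 ?mulmx1 ?subrr ?trmx0 ?sub0mx //; exact: flatmx0.
Qed.

End Iteration.

Section OrthogonalProjection.
Variables (R : realType) (d : nat).

Lemma orthproj_eq0 (V : 'M[R]_d) (y : 'cV[R]_d) : (orthproj V y == 0) = (V *m y == 0).
Proof.
rewrite /orthproj; set B := row_base V.
have BBt_unit : B *m B^T \in unitmx by apply/mulmx_trmx_unitmx/row_base_free.
apply/eqP/eqP => [Py0|Vy0].
  have By0 : B *m y = 0.
    by have := congr1 (mulmx B) Py0; rewrite mulmx0 !mulmxA mulmxV // mul1mx.
  by apply: submx_mul_eq0 By0; rewrite /B eq_row_base.
by rewrite -mulmxA (submx_mul_eq0 _ Vy0) ?mulmx0 // /B eq_row_base.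
Qed.

Lemma orthproj_eqP (V : 'M[R]_d) (x y : 'cV[R]_d) :
  orthproj V x = orthproj V y <-> V *m x = V *m y.
Proof.
have orthprojB : orthproj V x - orthproj V y = orthproj V (x - y).
  by rewrite /orthproj mulmxBr.
rewrite (rwP eqP) -subr_eq0 orthprojB orthproj_eq0 mulmxBr subr_eq0.
by split=> /eqP.
Qed.

Lemma solves_iff_orthproj n (A : 'M[R]_(n, d)) (b : 'cV[R]_n) (xstar x0 x : 'cV[R]_d)
    (Rw Vw : 'M[R]_d) :
  A *m xstar = b -> Vw *m Rw^T = 0 -> (Vw + Rw == A)%MS ->
  Rw *m (xstar - x) = 0 -> ((x - x0)^T <= Rw)%MS ->
  A *m x = b <-> orthproj Vw x0 = orthproj Vw xstar.
Proof.
move=> Axstar VR0 VRA Re0 /submxP[D xD].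
have Vx : Vw *m x = Vw *m x0.
  apply/eqP; rewrite -subr_eq0 -mulmxBr -[x - x0]trmxK xD trmx_mul mulmxA VR0.
  by rewrite mul0mx.
have solves_sub m (M : 'M[R]_(m, d)) :
    (M *m x == M *m xstar) = (M <= kermx (xstar - x))%MS.
  by rewrite sub_kermx mulmxBr subr_eq0 eq_sym.
rewrite orthproj_eqP -Vx -Axstar !(rwP eqP) !solves_sub -(eqmxP VRA) addsmx_sub.
by rewrite [(Rw <= _)%MS]sub_kermx Re0 eqxx andbT.
Qed.

End OrthogonalProjection.

Section AlmostSure.
Variables (R : realType) (dsp : measure_display) (Omega : measurableType dsp).
Variable (P : probability Omega R).

Lemma measurable_mulmx_eq0 m n (M : 'M[R]_(m, n)) (v : Omega -> 'cV[R]_n) :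
  (forall i, measurable_fun setT (fun om => v om i 0)) ->
  measurable [set om | M *m v om = 0].
Proof.
move=> mv.
have mMv i : measurable_fun setT (fun om => (M *m v om) i 0).
  under eq_fun do rewrite mxE.
  by apply: measurable_sum => j; apply: measurable_funM => //; exact: measurable_cst.
have -> : [set om | M *m v om = 0] =
    \bigcap_(i in [set: 'I_m]) ((fun om => (M *m v om) i 0) @^-1` [set 0]).
  apply/seteqP; split => om /= => [Mv0 i _|Mv0]; first by rewrite /= Mv0 mxE.
  by apply/matrixP => i j; rewrite ord1 [RHS]mxE; exact: Mv0.
apply: fin_bigcap_measurable => [|i _]; first exact: finite_finset.
by rewrite -[_ @^-1` _]setTI; apply: mMv => //; exact: measurable_set1.
Qed.

Lemma measurable_submx k n (M : 'M[R]_(k, n)) (V : 'M[R]_k) (v : Omega -> 'cV[R]_n) :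
  (forall i, measurable_fun setT (fun om => v om i 0)) ->
  measurable [set om | ((M *m v om)^T <= V)%MS].
Proof.
move=> mv; have -> : [set om | ((M *m v om)^T <= V)%MS] =
    [set om | (cokermx V)^T *m M *m v om = 0].
  rewrite predeqE => om /=; rewrite submxE -trmx_eq0 trmx_mul trmxK mulmxA.
  by split=> /eqP.
exact: measurable_mulmx_eq0.
Qed.

Lemma ae_of_probability1 (E : set Omega) :
  measurable E -> P E = 1%E -> {ae P, forall om, E om}.
Proof.
move=> mE PE1; apply/negligibleP; first exact: measurableC.
by apply: eq_trans (probability_setC P mE) _; rewrite PE1 subee.
Qed.

End AlmostSure.

Theorem mainTheorem6 (R : realType) (dsp : measure_display) (Omega : measurableType dsp)
  (P : probability Omega R) (n d : nat)
  (A : 'M[R]_(n, d)) (b : 'cV[R]_n) (xstar : 'cV[R]_d)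
  (w : Omega -> 'cV[R]_n) (ws : nat -> Omega -> 'cV[R]_n)
  (Rw Vw : 'M[R]_d) (x0 : 'cV[R]_d) :
  A *m xstar = b ->
  (* w and the w_l are random variables in R^n *)
  (forall i : 'I_n, measurable_fun setT (fun om => w om i 0)) ->
  (forall (l : nat) (i : 'I_n), measurable_fun setT (fun om => ws l om i 0)) ->
  (* Rw represents R(w) = N(w)^perp, where
     N(w) = span {z | P[z'A'w = 0] = 1} *)
  (forall y : 'cV[R]_d, (y^T <= Rw)%MS <->
     (forall z : 'cV[R]_d,
        P [set om | z^T *m A^T *m w om = 0] = 1%E -> z^T *m y = 0)) ->
  (* Vw is the subspace with Vw perp R(w) and Vw (+) R(w) = row(A) *)
  Vw *m Rw^T = 0 ->
  (Vw + Rw == A)%MS -> mxdirect (Vw + Rw) ->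
  (* P[A' w_l in R(w)] = 1 for all l *)
  (forall l, P [set om | ((A^T *m ws l om)^T <= Rw)%MS] = 1%E) ->
  {ae P, forall om,
    forall T : nat,
      (* T = min {k >= 0 | span{A'w_0,...,A'w_k} contains R(w)} (and T < oo) *)
      (Rw <= span_upto A (fun l => ws l om) T)%MS ->
      (forall k, (k < T)%N -> ~~ (Rw <= span_upto A (fun l => ws l om) k)%MS) ->
      (A *m (rk_iter A b x0 (fun l => ws l om) T.+1).1 = b <->
       orthproj Vw x0 = orthproj Vw xstar)}.
Proof.
move=> Axstar _ mws _ VR0 VRA _ PRw.
(* Neither the description of R(w) through w nor the minimality of T is
   needed: only the almost sure inclusion of every A'w_l in R(w). *)
have ae_dirs l : {ae P, forall om, ((A^T *m ws l om)^T <= Rw)%MS}.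
  by apply: ae_of_probability1 (PRw l); exact: measurable_submx.
apply: filterS (ae_foralln ae_dirs) => om dirsR T Rw_span _.
have inv := rk_iter_invariant x0 (ws^~ om) Axstar T.+1.
have span_Rw : (span_upto A (ws^~ om) T <= Rw)%MS.
  by apply/row_subP => i; rewrite rowK.
apply: solves_iff_orthproj Axstar VR0 VRA _ _.
  exact: submx_mul_eq0 Rw_span (rk_consistent inv).
exact: submx_trans (rk_drift inv) span_Rw.
Qed.
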